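(* Let $H$ be a complete $3$-graph whose edges (triples) are coloured red and blue, and let $d_r,d_b$ be positive integers such that $H$ has at least $d_r+d_b+1$ vertices. Fix a vertex $u$ of $H$. For each other vertex $v$, call the pair $uv$ red if $uv$ is contained in fewer than $d_r$ red triples, and blue if $uv$ is contained in fewer than $d_b$ blue triples. Then $u$ is in at most $2d_b$ red pairs, or $u$ is in at most $2d_r$ blue pairs.
   Context: A $3$-graph is a $3$-uniform hypergraph; the complete $3$-graph contains all triples of its vertex set. *)

From mathcomp Require Import all_boot.
Set Implicit Arguments. Unset Strict Implicit. Unset Printing Implicit Defensive.

(* A red/blue colouring of the complete 3-graph on a finite vertex type T is a
   function col : {set T} -> bool, only evaluated on 3-element sets;
   col e = true means the triple e is red, false means blue. *)

Definition pair_deg (T : finType) (col : {set T} -> bool) (b : bool) (u v : T) : nat :=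
  #|[set w : T | (w != u) && (w != v) && (col [set u; v; w] == b)]|.

Definition red_pair (T : finType) (col : {set T} -> bool) (dr : nat) (u v : T) : bool :=
  (v != u) && (pair_deg col true u v < dr).

Definition blue_pair (T : finType) (col : {set T} -> bool) (db : nat) (u v : T) : bool :=
  (v != u) && (pair_deg col false u v < db).

(* Every vertex v != u lies in exactly |T| - 2 triples with u, so with
   |T| >= d_r + d_b + 1 no pair uv is both red and blue.  Let R and B be the
   red and blue pairs at u, and double count the triples uvw with v in R and
   w in B: for fixed v at most d_r - 1 of them are red, for fixed w at most
   d_b - 1 of them are blue, so |R| |B| <= |R| (d_r - 1) + |B| (d_b - 1).
   If |R| > 2 d_b and |B| > 2 d_r, each term on the right is less than
   |R| |B| / 2, a contradiction. *)

From mathcomp Require Import all_boot zify.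

Set Implicit Arguments.
Unset Strict Implicit.
Unset Printing Implicit Defensive.

Lemma leq_mul_weighted_sum (r b x y : nat) :
  r * b <= r * x + b * y -> r <= 2 * y \/ b <= 2 * x.
Proof. nia. Qed.

Lemma sum_nat_indicator (I : finType) (A : {set I}) (P : pred I) :
  \sum_(i in A) (P i : nat) = #|[set i in A | P i]|.
Proof.
rewrite -sum1_card big_mkcond [RHS]big_mkcond /=.
by apply: eq_bigr => i _; rewrite inE; case: (i \in A); case: (P i).
Qed.

Lemma card_mul_le_colour_degrees (I J : finType) (c : I -> J -> bool)
    (R : {set I}) (B : {set J}) (x y : nat) :
  (forall v, v \in R -> #|[set w in B | c v w]| <= x) ->
  (forall w, w \in B -> #|[set v in R | ~~ c v w]| <= y) ->
  #|R| * #|B| <= #|R| * x + #|B| * y.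
Proof.
move=> degR degB.
have -> : #|R| * #|B| =
    \sum_(v in R) \sum_(w in B) (c v w : nat) +
    \sum_(w in B) \sum_(v in R) (~~ c v w : nat).
  rewrite [in X in _ = _ + X]exchange_big -big_split /= -sum1_card big_distrl /=.
  apply: eq_bigr => v _; rewrite mul1n -sum1_card -big_split /=.
  by apply: eq_bigr => w _; case: (c v w).
rewrite -!sum_nat_const.
apply: leq_add.
- by apply: leq_sum => v /degR; rewrite sum_nat_indicator.
- by apply: leq_sum => w /degB; rewrite sum_nat_indicator.
Qed.

Section PairDegrees.

Variables (T : finType) (col : {set T} -> bool) (u : T).

Lemma pair_deg_red_blue v : v != u ->
  pair_deg col true u v + pair_deg col false u v = #|T| - 2.
Proof.
move=> vu; rewrite /pair_deg -cardsUI.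
have -> : [set w | (w != u) && (w != v) && (col [set u; v; w] == true)]
    :&: [set w | (w != u) && (w != v) && (col [set u; v; w] == false)] = set0.
  by apply/setP => w; rewrite !inE; case: (col _); rewrite ?andbF.
have -> : [set w | (w != u) && (w != v) && (col [set u; v; w] == true)]
    :|: [set w | (w != u) && (w != v) && (col [set u; v; w] == false)] =
    ~: [set u; v].
  by apply/setP => w; rewrite !inE negb_or; case: (col _); rewrite ?andbT ?andbF ?orbF.
have := cardsC [set u; v]; rewrite cards0 cards2 eq_sym (negbTE vu); lia.
Qed.

Lemma card_le_pair_deg (b : bool) v (S : {set T}) :
  (forall w, w \in S -> [/\ w != u, w != v & col [set u; v; w] = b]) ->
  #|S| <= pair_deg col b u v.
Proof.
move=> hS; apply/subset_leq_card/subsetP => w /hS[wu wv cw].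
by rewrite inE wu wv cw eqxx.
Qed.

Lemma red_pair_blue_pair (dr db : nat) v :
  dr + db + 1 <= #|T| -> red_pair col dr u v -> ~~ blue_pair col db u v.
Proof.
move=> hT /andP[vu hr]; apply/negP => /andP[_ hb].
have := pair_deg_red_blue vu; lia.
Qed.

End PairDegrees.

Theorem lemma2p2 (T : finType) (col : {set T} -> bool) (dr db : nat)
  (hdr : 0 < dr) (hdb : 0 < db) (hT : dr + db + 1 <= #|T|) (u : T) :
  #|[set v : T | red_pair col dr u v]| <= 2 * db \/
  #|[set v : T | blue_pair col db u v]| <= 2 * dr.
Proof.
set R := [set v | _]; set B := [set v | _].
have RB_neq v w : v \in R -> w \in B -> w != v.
  rewrite !inE => vR wB; apply: contraTneq wB => ->.
  exact: red_pair_blue_pair vR.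
have degR v : v \in R -> #|[set w in B | col [set u; v; w]]| <= dr.-1.
  move=> vR; have /andP[_ hr] : red_pair col dr u v by rewrite inE in vR.
  apply: leq_trans (_ : pair_deg col true u v <= _); last by lia.
  apply: card_le_pair_deg => w; rewrite inE => /andP[wB cw].
  by split=> //; [move: wB; rewrite inE => /andP[] | exact: RB_neq].
have degB w : w \in B -> #|[set v in R | ~~ col [set u; v; w]]| <= db.-1.
  move=> wB; have /andP[_ hb] : blue_pair col db u w by rewrite inE in wB.
  apply: leq_trans (_ : pair_deg col false u w <= _); last by lia.
  apply: card_le_pair_deg => v; rewrite inE => /andP[vR cv].
  split; first by move: vR; rewrite inE => /andP[].
  - by rewrite eq_sym; exact: RB_neq.
  - by rewrite setUAC (negbTE cv).
have [hR | hB] := leq_mul_weighted_sum (card_mul_le_colour_degrees degR degB).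
- by left; lia.
- by right; lia.
Qed.
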